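(* Let $A$ be a commutative ring, $r,d\ge1$, $B=A[x_1,\dots,x_r]$, let $x^\alpha\in B$ be a monomial and $k,m$ positive integers with $k\le d$. If $km\le d$ then $$\gamma^k(x^{m\alpha})\times\gamma^{d-k}(1)-(-1)^{km-k}m\,\gamma^{km}(x^\alpha)\times\gamma^{d-km}(1)\in\Gamma^d_A(B)_{<km\alpha},$$ and if $km>d$ then $\gamma^k(x^{m\alpha})\times\gamma^{d-k}(1)\in\Gamma^d_A(B)_{<km\alpha}$.
   Context: $\Gamma^d_A(B)$ is identified with the ring of symmetric tensors $\mathrm{TS}^d_A(B)=(B^{\otimes_A d})^{\mathfrak S_d}$ (componentwise multiplication). For a monomial $f$ and $0\le k\le d$, $\gamma^k(f)\times\gamma^{d-k}(1)$ denotes the sum of all distinct tensors obtained by permuting the factors of $f^{\otimes k}\otimes1^{\otimes(d-k)}$, i.e. $\sum_{S\subseteq\{1..d\},|S|=k}\bigotimes_{j=1}^d f_j$ with $f_j=f$ for $j\in S$ and $f_j=1$ otherwise. $B^{\otimes d}$ is $\mathbb{N}^r$-graded by giving $x^{\beta_1}\otimes\dots\otimes x^{\beta_d}$ multidegree $\beta_1+\dots+\beta_d$; this induces an $\mathbb{N}^r$-grading of $\Gamma^d_A(B)$. For $\gamma\in\mathbb{N}^r$, $\Gamma^d_A(B)_{<\gamma}$ is the $A$-subalgebra generated by the homogeneous elements of multidegree $\beta$ with $\beta<\gamma$, where $\beta<\gamma$ means $\beta\le\gamma$ componentwise and $\beta\ne\gamma$. *)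

From HB Require Import structures.
From mathcomp Require Import all_boot all_algebra fingroup perm.
From mathcomp Require Import mpoly.
Set Implicit Arguments. Unset Strict Implicit. Unset Printing Implicit Defensive.
Import GRing.Theory.
Local Open Scope ring_scope.

(* B^{(x)_A d} is realized (canonically) as
   the polynomial ring A[x_{j,i} | j < d, i < r], with variables indexed by
   'I_d * 'I_r through enum_rank.  The j-th tensor factor embedding sends
   x_i to x_{j,i}; f_1 (x) ... (x) f_d = \prod_j emb j f_j. *)

Definition tidx (d r : nat) : nat := #|{: 'I_d * 'I_r}|.

Definition tvar (d r : nat) (j : 'I_d) (i : 'I_r) : 'I_(tidx d r) :=
  enum_rank (j, i).

Definition emb (A : comNzRingType) (d r : nat) (j : 'I_d) (f : {mpoly A[r]})
  : {mpoly A[tidx d r]} :=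
  f \mPo [tuple 'X_(tvar j i) | i < r].

(* gamma^k(f) x gamma^{d-k}(1) : sum over k-subsets S of positions of
   the tensor with f in positions of S and 1 elsewhere *)
Definition gamma_times_one (A : comNzRingType) (d r : nat) (f : {mpoly A[r]})
  (k : nat) : {mpoly A[tidx d r]} :=
  \sum_(S : {set 'I_d} | #|S| == k) \prod_(j in S) emb j f.

Definition perm_tensor (A : comNzRingType) (d r : nat) (s : 'S_d)
  (p : {mpoly A[tidx d r]}) : {mpoly A[tidx d r]} :=
  p \mPo [tuple 'X_(tvar (s (enum_val k).1) (enum_val k).2) | k < tidx d r].

(* symmetric tensors TS^d_A(B) = Gamma^d_A(B) *)
Definition symmetric_tensor (A : comNzRingType) (d r : nat)
  (p : {mpoly A[tidx d r]}) : Prop :=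
  forall s : 'S_d, perm_tensor s p = p.

(* N^r-multidegree of the tensor monomial x^{b_1} (x) ... (x) x^{b_d}:
   b_1 + ... + b_d *)
Definition tmdeg (d r : nat) (m : 'X_{1..tidx d r}) (i : 'I_r) : nat :=
  (\sum_(j < d) m (tvar j i))%N.

Definition homog_of (A : comNzRingType) (d r : nat) (b : 'I_r -> nat)
  (p : {mpoly A[tidx d r]}) : Prop :=
  forall m, m \in msupp p -> forall i, tmdeg m i = b i.

Definition ltdeg (r : nat) (b c : 'I_r -> nat) : Prop :=
  (forall i, (b i <= c i)%N) /\ exists i, b i != c i.

Inductive gen_alg (A : comNzRingType) (n : nat) (P : {mpoly A[n]} -> Prop)
  : {mpoly A[n]} -> Prop :=
  | gen_alg_gen p : P p -> gen_alg P p
  | gen_alg_one : gen_alg P 1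
  | gen_alg_add p q : gen_alg P p -> gen_alg P q -> gen_alg P (p + q)
  | gen_alg_mul p q : gen_alg P p -> gen_alg P q -> gen_alg P (p * q)
  | gen_alg_scale (a : A) p : gen_alg P p -> gen_alg P (a *: p).

Definition Gamma_lt (A : comNzRingType) (d r : nat) (c : 'I_r -> nat)
  (p : {mpoly A[tidx d r]}) : Prop :=
  gen_alg (fun q : {mpoly A[tidx d r]} =>
             symmetric_tensor q /\ exists b, ltdeg b c /\ homog_of b q) p.

From HB Require Import structures.
From mathcomp Require Import all_boot all_algebra fingroup perm.
From mathcomp Require Import mpoly.
From mathcomp Require Import ring zify.
Set Implicit Arguments. Unset Strict Implicit. Unset Printing Implicit Defensive.
Import GRing.Theory.
Local Open Scope ring_scope.

(* Let [e_i] and [p_i] be the elementary symmetric and power-sum polynomials in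
   [y_1, ..., y_d] over [int], and [G_N] the subalgebra generated by
   [e_1, ..., e_(N-1)].  Newton's identities show [p_n = (-1)^(n-1) n e_n] modulo
   [G_n], and then, by induction on [k], [e_k(y^m) = (-1)^(km-k) m e_(km)] modulo
   [G_(km)]: the identity obtained from Newton is [k] times the wanted one, and [k]
   can be cancelled because [G_N] consists exactly of the polynomials in
   [e_1, ..., e_(N-1)] and a symmetric polynomial is uniquely such a polynomial in
   all the [e_i].  Sending [y_j] to [1 ⊗ ... ⊗ x^alpha ⊗ ... ⊗ 1] maps [e_i(y^m)] to
   [γ^i(x^(m alpha)) × γ^(d-i)(1)], and for [0 < i < km] the image of [e_i] is a
   symmetric tensor of multidegree [i alpha < km alpha].  When [km > d], [e_(km) = 0]. *)

Section SymmetricFunctions.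
Variables (R : comNzRingType) (d : nat).
Implicit Types (y : 'I_d -> R).

Definition esym y n := \sum_(S : {set 'I_d} | #|S| == n) \prod_(j in S) y j.
Definition psum y e := \sum_(j < d) y j ^+ e.

(* The two halves of [e_n p_e], according to whether the index of the power lies
   in the subset. *)
Definition esym_psum_out y e n := \sum_(S : {set 'I_d} | #|S| == n)
  \sum_(j | j \notin S) (\prod_(l in S) y l) * y j ^+ e.
Definition esym_psum_in y e n := \sum_(S : {set 'I_d} | #|S| == n)
  \sum_(j in S) (\prod_(l in S :\ j) y l) * y j ^+ e.

Lemma esym_mul_psum y n e :
  esym y n * psum y e = esym_psum_out y e n + esym_psum_in y e.+1 n.
Proof.
rewrite /esym /esym_psum_out /esym_psum_in mulr_suml -big_split /=.
apply: eq_bigr => S _; rewrite /psum mulr_sumr (bigID (mem S)) /= addrC.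
congr (_ + _); apply: eq_bigr => j jS.
by rewrite (big_setD1 j jS) /= exprS (mulrC (y j)) -mulrA.
Qed.

Lemma esym_psum_in1 y n : esym_psum_in y 1 n = n%:R * esym y n.
Proof.
rewrite /esym_psum_in /esym mulr_sumr; apply: eq_bigr => S /eqP cardS.
transitivity (\sum_(j in S) \prod_(l in S) y l).
  by apply: eq_bigr => j jS; rewrite expr1 (big_setD1 j jS) /= mulrC.
by rewrite sumr_const cardS mulr_natl.
Qed.

Lemma esym_psum_in0 y e : esym_psum_in y e 0 = 0.
Proof. by rewrite /esym_psum_in big1 // => S /eqP /cards0_eq ->; rewrite big_set0. Qed.

Lemma esym_psum_inS y e n : esym_psum_in y e n.+1 = esym_psum_out y e n.
Proof.
rewrite /esym_psum_in /esym_psum_out.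
rewrite (exchange_big_dep xpredT) //= [RHS](exchange_big_dep xpredT) //=.
apply: eq_bigr => j _.
rewrite (reindex_onto (fun T => j |: T) (fun S => S :\ j)); last first.
  by move=> S /andP[_ jS]; rewrite setD1K.
apply: eq_big => [T|T /andP[/andP[_ _] /eqP ->]] //.
rewrite setU11 andbT cardsU1; case jT: (j \in T) => /=.
  rewrite andbF; apply/negbTE/negP => /andP[_ /eqP E].
  by move: jT; rewrite -E !inE eqxx.
by rewrite add1n eqSS setU1K ?jT // eqxx andbT.
Qed.

Lemma newton_esym y n :
  n%:R * esym y n = \sum_(i < n) (-1) ^+ i * (esym y (n - i.+1)%N * psum y i.+1).
Proof.
case: n => [|n]; first by rewrite mul0r big_ord0.
rewrite (eq_bigr (fun i : 'I_n.+1 => (-1) ^+ i * esym_psum_out y i.+1 (n - i)%N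
    + (-1) ^+ i * esym_psum_in y i.+2 (n - i)%N)); last first.
  by move=> i _; rewrite subSS esym_mul_psum mulrDr.
rewrite big_split /= big_ord_recl big_ord_recr /= subnn esym_psum_in0 mulr0 addr0.
rewrite subn0 expr0 mul1r -esym_psum_in1 -esym_psum_inS -addrA [X in _ + X]addrC.
rewrite -big_split /= big1 ?addr0 // => i _.
rewrite /bump leq0n add1n -(subnSK (ltn_ord i)) esym_psum_inS exprS mulN1r mulNr.
by rewrite subrr.
Qed.

Lemma esym0 y : esym y 0 = 1.
Proof. by rewrite /esym (big_pred1 set0) ?big_set0 // => S /=; rewrite cards_eq0. Qed.

Lemma esym_eq0 y n : (d < n)%N -> esym y n = 0.
Proof.
move=> ltdn; rewrite /esym big_pred0 // => S; apply/negbTE.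
apply: contraTneq ltdn => <-; rewrite -leqNgt.
by apply: leq_trans (max_card _) _; rewrite card_ord.
Qed.

Lemma psum_expr y m e : psum (fun j => y j ^+ m) e = psum y (m * e).
Proof. by apply: eq_bigr => j _; rewrite exprM. Qed.

Lemma eq_esym y y' n : y =1 y' -> esym y n = esym y' n.
Proof. by move=> eq_y; apply: eq_bigr => S _; apply: eq_bigr => j _. Qed.

Lemma esym_perm (s : 'S_d) y n : esym (fun j => y (s j)) n = esym y n.
Proof.
rewrite /esym [RHS](reindex_inj (imset_inj (@perm_inj _ s))) /=.
apply: eq_big => [S|S _]; first by rewrite card_imset //; apply: perm_inj.
by rewrite big_imset //=; apply: in2W; apply: perm_inj.
Qed.

End SymmetricFunctions.

Lemma rmorph_esym (R R' : comNzRingType) d (f : {rmorphism R -> R'})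
    (y : 'I_d -> R) n :
  f (esym y n) = esym (fun j => f (y j)) n.
Proof. by rewrite rmorph_sum; apply: eq_bigr => S _; apply: rmorph_prod. Qed.

Lemma signr_sqr (R : pzRingType) n : (-1) ^+ n * (-1) ^+ n = 1 :> R.
Proof. by rewrite -[RHS](signrMK n) mulr1. Qed.

Section GenAlgClosure.
Variables (A : comNzRingType) (n : nat) (P : {mpoly A[n]} -> Prop).
Local Notation G := (gen_alg P).

Lemma gen_alg_int (z : int) : G z%:~R.
Proof.
rewrite -[z%:~R]mulr1 -(rmorph_int (@mpolyC n A)) mul_mpolyC.
by apply: gen_alg_scale; apply: gen_alg_one.
Qed.

Lemma gen_alg_nat k : G k%:R.
Proof. exact: (gen_alg_int k). Qed.

Lemma gen_alg0 : G 0.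
Proof. exact: gen_alg_nat 0. Qed.

Lemma gen_algN p : G p -> G (- p).
Proof. by move=> Gp; rewrite -scaleN1r; apply: gen_alg_scale. Qed.

Lemma gen_alg_sum I (s : seq I) (Q : pred I) F :
  (forall i, Q i -> G (F i)) -> G (\sum_(i <- s | Q i) F i).
Proof. by move=> GF; apply: big_ind => //; [apply: gen_alg0 | apply: gen_alg_add]. Qed.

Lemma gen_alg_prod I (s : seq I) (Q : pred I) F :
  (forall i, Q i -> G (F i)) -> G (\prod_(i <- s | Q i) F i).
Proof. by move=> GF; apply: big_ind => //; [apply: gen_alg_one | apply: gen_alg_mul]. Qed.

Lemma gen_algX p k : G p -> G (p ^+ k).
Proof. by move=> Gp; rewrite -(subn0 k) -prodr_const_nat; apply: gen_alg_prod. Qed.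

Lemma gen_alg_sign k : G ((-1) ^+ k).
Proof. exact/gen_algX/gen_algN/gen_alg_one. Qed.

Lemma gen_alg_sign_nat k l : G ((-1) ^+ k * l%:R).
Proof. by apply: gen_alg_mul; [apply: gen_alg_sign | apply: gen_alg_nat]. Qed.

End GenAlgClosure.

Lemma gen_alg_sub (A : comNzRingType) n (P Q : {mpoly A[n]} -> Prop) p :
  (forall q, P q -> Q q) -> gen_alg P p -> gen_alg Q p.
Proof.
move=> PQ; elim=> *; by [apply/gen_alg_gen/PQ | apply: gen_alg_one
  | apply: gen_alg_add | apply: gen_alg_mul | apply: gen_alg_scale].
Qed.

Lemma gen_alg_rmorph (A : comNzRingType) n N
    (f : {rmorphism {mpoly int[n]} -> {mpoly A[N]}})
    (P : {mpoly int[n]} -> Prop) (Q : {mpoly A[N]} -> Prop) p :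
  (forall q, P q -> gen_alg Q (f q)) -> gen_alg P p -> gen_alg Q (f p).
Proof.
move=> GfP; elim=> {p} [p /GfP //| | p q _ Gp _ Gq | p q _ Gp _ Gq | a p _ Gp].
- by rewrite rmorph1; apply: gen_alg_one.
- by rewrite rmorphD; apply: gen_alg_add.
- by rewrite rmorphM; apply: gen_alg_mul.
rewrite -mul_mpolyC rmorphM -[a]intz (rmorph_int (@mpolyC n int)) rmorph_int.
by apply: gen_alg_mul => //; apply: gen_alg_int.
Qed.

Section IntegralSymmetric.
Variable d : nat.
Local Notation X := (fun j : 'I_d => 'X_j : {mpoly int[d]}).
Local Notation S := [tuple mesym d int i.+1 | i < d].

Definition esym_below N (p : {mpoly int[d]}) :=
  exists2 i, (0 < i < N)%N & p = esym X i.
Local Notation G N := (gen_alg (esym_below N)).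

(* [t] is a polynomial in the first [N - 1] variables, which [\mPo S] sends to
   [e_1, ..., e_(N-1)]. *)
Definition msupp_below N (t : {mpoly int[d]}) :=
  forall m, m \in msupp t -> forall i : 'I_d, (N <= i.+1)%N -> m i = 0%N.

Lemma gen_esym N i : (0 < i < N)%N -> G N (esym X i).
Proof. by move=> iN; apply: gen_alg_gen; exists i. Qed.

Lemma gen_esym_mono N N' p : (N <= N')%N -> G N p -> G N' p.
Proof.
move=> leNN'; apply: gen_alg_sub => q [i /andP[i0 iN] ->]; exists i => //.
by rewrite i0 (leq_trans iN leNN').
Qed.

Lemma gen_esym_comp N t : msupp_below N t -> G N (t \mPo S).
Proof.
move=> tN; rewrite comp_mpolyEX big_seq; apply: gen_alg_sum => m mt.
apply: gen_alg_scale; rewrite comp_mpolyX; apply: gen_alg_prod => i _.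
have [->|mi0] := posnP (m i); first by rewrite expr0; apply: gen_alg_one.
apply/gen_algX; rewrite tnth_mktuple; apply: gen_esym => /=.
by rewrite ltnNge; apply/negP => /(tN m mt) mi; rewrite mi in mi0.
Qed.

Lemma gen_esym_decomp N p : G N p -> exists2 t, msupp_below N t & p = t \mPo S.
Proof.
elim=> {p} [p [i /andP[i0 iN] ->]| | p q _ [t1 t1N ->] _ [t2 t2N ->]
           | p q _ [t1 t1N ->] _ [t2 t2N ->] | a p _ [t tN ->]].
- have [id|ltdi] := leqP i d; last first.
    by exists 0; [move=> m; rewrite msupp0 | rewrite esym_eq0 // comp_mpoly0].
  case: i i0 iN id => // i _ iN id; exists 'X_(Ordinal id).
    move=> m; rewrite msuppX inE => /eqP -> j jN; rewrite mnm1E.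
    by case: eqP => // eij; move: jN; rewrite -eij /= leqNgt iN.
  by rewrite comp_mpolyXU -tnth_nth tnth_mktuple.
- exists 1; last by rewrite comp_mpoly1.
  by move=> m; rewrite msupp1 inE => /eqP -> j _; rewrite mnm0E.
- exists (t1 + t2); last by rewrite comp_mpolyD.
  by move=> m /msuppD_le; rewrite mem_cat => /orP[]; [apply: t1N | apply: t2N].
- exists (t1 * t2); last by rewrite rmorphM.
  move=> m /msuppM_le /allpairsP [[m1 m2] /= [m1t m2t ->]] j jN.
  by rewrite mnmDE (t1N _ m1t _ jN) (t2N _ m2t _ jN).
- by exists (a *: t); [move=> m /msuppZ_le; apply: tN | rewrite comp_mpolyZ].
Qed.

(* Over [int], [k p = t \mPo S] forces [p = (t / k) \mPo S] by uniqueness in the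
   fundamental theorem, and [t / k] has no new monomials. *)
Lemma gen_esym_divn N k p :
  (0 < k)%N -> p \is symmetric -> G N (k%:R * p) -> G N p.
Proof.
move=> k0 /sym_fundamental [t [tSp _]] /gen_esym_decomp [t' t'N ktp].
have {}tSp : t \mPo S = p := tSp.
have ktt' : k%:R * t = t'.
  apply: msym_fundamental_un; change ((k%:R * t) \mPo S = t' \mPo S).
  by rewrite rmorphM rmorph_nat -ktp; congr (_ * _); exact: tSp.
rewrite -tSp; apply: gen_esym_comp => m mt; apply: t'N.
rewrite -ktt' -[_ \in _]negbK -mcoeff_eq0 mulr_natl mcoeffMn.
by rewrite Num.Theory.mulrn_eq0 negb_or -lt0n k0 mcoeff_eq0 negbK.
Qed.

Lemma gen_esym_of_sub N j a b p :
  (0 < j < N)%N -> G j (p - (-1) ^+ a * b%:R * esym X j) -> G N p.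
Proof.
move=> jN Gj; rewrite -(subrK ((-1) ^+ a * b%:R * esym X j) p).
apply: gen_alg_add; first by apply: gen_esym_mono Gj; case/andP: jN => _ /ltnW.
by apply: gen_alg_mul; [apply: gen_alg_sign_nat | apply: gen_esym].
Qed.

Lemma psum_sub_esym_gen n :
  (0 < n)%N -> G n (psum X n - (-1) ^+ n.-1 * n%:R * esym X n).
Proof.
elim/ltn_ind: n => -[//|n] IH _.
have := newton_esym X n.+1; rewrite big_ord_recr /= subnn esym0 mul1r.
set Sm := \sum_(i < n) _; set s := (-1) ^+ n => newton.
have -> : psum X n.+1 - s * n.+1%:R * esym X n.+1 = s * (- Sm).
  transitivity (s * s * psum X n.+1 - s * (n.+1%:R * esym X n.+1)).
    by rewrite signr_sqr mul1r mulrA.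
  by rewrite newton; ring.
apply/gen_alg_mul/gen_algN; first exact: gen_alg_sign.
apply: gen_alg_sum => i _; rewrite mulrA; apply: gen_alg_mul.
  apply: gen_alg_mul; first exact: gen_alg_sign.
  by apply: gen_esym; rewrite subSS subn_gt0 ltn_ord ltnS leq_subr.
have lt_in : (i.+1 < n.+1)%N by rewrite ltnS.
by apply: (gen_esym_of_sub _ (IH _ lt_in isT)); rewrite lt_in.
Qed.

Lemma psum_gen N e : (0 < e < N)%N -> G N (psum X e).
Proof.
by move=> eN; apply: (gen_esym_of_sub eN); apply: psum_sub_esym_gen; case/andP: eN.
Qed.

Lemma esym_expr_symmetric m n : esym (fun j => X j ^+ m) n \is symmetric.
Proof.
apply/issymP => s; rewrite rmorph_esym -(esym_perm s (fun j => X j ^+ m)).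
apply: eq_esym => j /=; rewrite rmorphXn; congr (_ ^+ _).
by rewrite /= /msym mmapX mmap1U.
Qed.

Lemma esym_expr_sub_gen m k : (0 < m)%N -> (0 < k)%N ->
  G (k * m) (esym (fun j => X j ^+ m) k
             - (-1) ^+ (k * m - k) * m%:R * esym X (k * m)%N).
Proof.
move=> m0; elim/ltn_ind: k => k IH k0.
apply: (gen_esym_divn k0).
  apply: rpredB; first exact: esym_expr_symmetric.
  apply: rpredM; last exact: (esym_expr_symmetric 1).
  by rewrite rpredM ?rpred_nat // rpredX // rpredN rpred1.
case: k k0 IH => // k _ IH.
have := newton_esym (fun j => X j ^+ m) k.+1.
rewrite big_ord_recr /= subnn esym0 mul1r psum_expr.
set Sm := \sum_(i < k) _; set t := (m * k.+1)%N; set u := (-1) ^+ k => newton.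
have -> : (k.+1 * m = t)%N by rewrite mulnC.
have t0 : (0 < t)%N by rewrite muln_gt0 m0.
have := psum_sub_esym_gen t0; set v := (-1) ^+ t.-1 => Gt.
have uvw : u * v = (-1) ^+ (t - k.+1).
  have tk : (k.+1 <= t)%N by rewrite leq_pmull.
  rewrite -exprD (_ : (k + t.-1 = (t - k.+1) + (k + k))%N); last by lia.
  by rewrite exprD exprD signr_sqr mulr1.
have -> : k.+1%:R * (esym (fun j => X j ^+ m) k.+1 - (-1) ^+ (t - k.+1) * m%:R * esym X t)
   = Sm + u * (psum X t - v * t%:R * esym X t).
  by rewrite mulrBr -uvw newton /t natrM; ring.
apply: gen_alg_add; last by apply: gen_alg_mul => //; apply: gen_alg_sign.
apply: gen_alg_sum => i _; rewrite mulrA; apply: gen_alg_mul.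
  apply: gen_alg_mul; first exact: gen_alg_sign.
  have ltik : (k - i < k.+1)%N by rewrite ltnS leq_subr.
  have i0 : (0 < k - i)%N by rewrite subn_gt0 ltn_ord.
  apply: (gen_esym_of_sub _ (IH _ ltik i0)).
  by rewrite muln_gt0 i0 m0 /t [(m * _)%N]mulnC ltn_pmul2r.
rewrite (psum_expr X); apply: psum_gen.
by rewrite muln_gt0 m0 /t ltn_pmul2l //= ltnS.
Qed.

End IntegralSymmetric.

Lemma comp_mpoly_comp (A : comNzRingType) n N M (p : {mpoly A[n]})
    (t1 : n.-tuple {mpoly A[N]}) (t2 : N.-tuple {mpoly A[M]}) :
  (p \mPo t1) \mPo t2 = p \mPo [tuple tnth t1 i \mPo t2 | i < n].
Proof.
rewrite [p \mPo t1]comp_mpolyE raddf_sum [RHS]comp_mpolyE /=; apply: eq_bigr => m _.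
rewrite comp_mpolyZ rmorph_prod; congr (_ *: _); apply: eq_bigr => i _.
by rewrite rmorphXn tnth_mktuple.
Qed.

Section TensorGrading.
Variables (A : comNzRingType) (d r : nat).
Local Notation T := {mpoly A[tidx d r]}.
Implicit Types (b : 'I_r -> nat) (p q : T).

Lemma eq_homog_of b b' p : b =1 b' -> homog_of b p -> homog_of b' p.
Proof. by move=> eq_b bp m mp i; rewrite -eq_b bp. Qed.

Lemma homog_of0 b : homog_of b (0 : T).
Proof. by move=> m; rewrite msupp0. Qed.

Lemma homog_ofD b p q : homog_of b p -> homog_of b q -> homog_of b (p + q).
Proof. by move=> bp bq m /msuppD_le; rewrite mem_cat => /orP[]; [apply: bp | apply: bq]. Qed.

Lemma tmdeg0 i : tmdeg (0%MM : 'X_{1..tidx d r}) i = 0%N.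
Proof. by rewrite /tmdeg big1 // => j _; rewrite mnm0E. Qed.

Lemma tmdegD (m1 m2 : 'X_{1..tidx d r}) i :
  tmdeg (m1 + m2) i = (tmdeg m1 i + tmdeg m2 i)%N.
Proof. by rewrite /tmdeg -big_split /=; apply: eq_bigr => j _; rewrite mnmDE. Qed.

Lemma homog_of1 : homog_of (fun=> 0%N) (1 : T).
Proof. by move=> m; rewrite msupp1 inE => /eqP -> i; rewrite tmdeg0. Qed.

Lemma homog_ofM b1 b2 p q : homog_of b1 p -> homog_of b2 q ->
  homog_of (fun i => b1 i + b2 i)%N (p * q).
Proof.
move=> b1p b2q m /msuppM_le /allpairsP [[m1 m2] /= [m1p m2q ->]] i.
by rewrite tmdegD (b1p _ m1p) (b2q _ m2q).
Qed.

Lemma homog_of_sum I (s : seq I) (P : pred I) (F : I -> T) b :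
  (forall x, P x -> homog_of b (F x)) -> homog_of b (\sum_(x <- s | P x) F x).
Proof. by move=> bF; apply: big_ind => //; [apply: homog_of0 | apply: homog_ofD]. Qed.

Lemma homog_of_prod I (s : seq I) (P : pred I) (F : I -> T) (B : I -> 'I_r -> nat) :
  (forall x, P x -> homog_of (B x) (F x)) ->
  homog_of (fun i => \sum_(x <- s | P x) B x i)%N (\prod_(x <- s | P x) F x).
Proof.
move=> BF; elim: s => [|x s IHs].
  by rewrite big_nil; apply: eq_homog_of homog_of1 => i; rewrite big_nil.
rewrite big_cons; case: ifP => Px.
  by apply: eq_homog_of (homog_ofM (BF x Px) IHs) => i; rewrite big_cons Px.
by apply: eq_homog_of IHs => i; rewrite big_cons Px.
Qed.

Lemma homog_ofX b p n : homog_of b p -> homog_of (fun i => n * b i)%N (p ^+ n).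
Proof.
move=> bp; elim: n => [|n IHn].
  by rewrite expr0; apply: eq_homog_of homog_of1 => i; rewrite mul0n.
by rewrite exprS; apply: eq_homog_of (homog_ofM bp IHn) => i; rewrite mulSn.
Qed.

Lemma homog_of_tvar (j : 'I_d) (i0 : 'I_r) :
  homog_of (fun i => (i0 == i) : nat) ('X_(tvar j i0) : T).
Proof.
have tvar_inj : injective (fun x : 'I_d * 'I_r => tvar x.1 x.2).
  by move=> [j1 i1] [j2 i2] /= /enum_rank_inj.
move=> m; rewrite msuppX inE => /eqP -> i; rewrite /tmdeg (bigD1 j) //= mnm1E.
rewrite big1 ?addn0 => [|j' ne_j'j]; last first.
  rewrite mnm1E; case: eqP => // /(@tvar_inj (j, i0) (j', i)) [ej _].
  by rewrite ej eqxx in ne_j'j.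
case: eqP => [/(@tvar_inj (j, i0) (j, i)) [->]|ne]; first by rewrite eqxx.
by case: eqP => // ei; case: ne; rewrite ei.
Qed.

Lemma homog_of_emb (j : 'I_d) (alpha : 'X_{1..r}) :
  homog_of alpha (emb j ('X_[alpha] : {mpoly A[r]})).
Proof.
rewrite /emb comp_mpolyX (eq_bigr (fun i0 => 'X_(tvar j i0) ^+ alpha i0)) => [|i0 _];
  last by rewrite tnth_mktuple.
apply: eq_homog_of
  (homog_of_prod (fun i0 _ => homog_ofX (n := alpha i0) (@homog_of_tvar j i0))) => i.
rewrite (bigD1 i) //= eqxx muln1 big1 ?addn0 // => i0 /negbTE ->; exact: muln0.
Qed.

Lemma homog_of_gamma (alpha : 'X_{1..r}) i :
  homog_of (fun l => i * alpha l)%N (gamma_times_one d ('X_[alpha] : {mpoly A[r]}) i).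
Proof.
apply: homog_of_sum => S /eqP cardS.
apply: eq_homog_of (homog_of_prod (fun j _ => @homog_of_emb j alpha)) => l.
by rewrite sum_nat_const cardS.
Qed.

Lemma perm_tensor_emb (s : 'S_d) (j : 'I_d) (f : {mpoly A[r]}) :
  perm_tensor s (emb j f) = emb (s j) f.
Proof.
rewrite /perm_tensor /emb comp_mpoly_comp; congr (_ \mPo _); apply: eq_from_tnth => i.
by rewrite !tnth_mktuple comp_mpolyXU -tnth_nth tnth_mktuple /tvar enum_rankK.
Qed.

Lemma symmetric_gamma (f : {mpoly A[r]}) k : symmetric_tensor (gamma_times_one d f k).
Proof.
move=> s; rewrite /perm_tensor [LHS](rmorph_esym (comp_mpoly _)) -[RHS](esym_perm s).
by apply: eq_esym => j; apply: perm_tensor_emb.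
Qed.

Lemma gamma_times_one_lt (alpha : 'X_{1..r}) K i : (0 < i < K)%N ->
  Gamma_lt (fun l => K * alpha l)%N (gamma_times_one d ('X_[alpha] : {mpoly A[r]}) i).
Proof.
move=> /andP[i0 iK]; have [alpha0|/eqP alpha_neq0] := eqVneq alpha 0%MM.
  apply: gen_alg_sum => S _; apply: gen_alg_prod => j _.
  by rewrite alpha0 mpolyX0 /emb comp_mpoly1; apply: gen_alg_one.
apply: gen_alg_gen; split; first exact: symmetric_gamma.
exists (fun l => i * alpha l)%N; split; last exact: homog_of_gamma.
split=> [l|]; first by rewrite leq_mul2r (ltnW iK) orbT.
have [l alpha_l] : exists l, alpha l != 0%N.
  apply/existsP; apply: contra_notT alpha_neq0 => /existsPn alpha_eq0.
  by apply/mnmP => l; rewrite mnm0E; apply/eqP; rewrite -[_ == _]negbK alpha_eq0.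
by exists l; rewrite eqn_pmul2r ?lt0n // ltn_eqF.
Qed.

End TensorGrading.

Section Specialisation.
Variables (A : comNzRingType) (d r : nat) (alpha : 'X_{1..r}).
Local Notation psi := (mmap (S := {mpoly A[tidx d r]}) intr
  (fun j => emb j ('X_[alpha] : {mpoly A[r]}))).

Lemma mmap_XU j : psi 'X_j = emb j ('X_[alpha] : {mpoly A[r]}).
Proof. by rewrite mmapX mmap1U. Qed.

Lemma mmap_esym_expr m k : psi (esym (fun j : 'I_d => 'X_j ^+ m) k)
  = gamma_times_one d ('X_[alpha] ^+ m : {mpoly A[r]}) k.
Proof.
rewrite rmorph_esym; apply: eq_esym => j /=.
by rewrite rmorphXn /emb [RHS]rmorphXn; congr (_ ^+ _); apply: mmap_XU.
Qed.

Lemma mmap_esym k : psi (esym (fun j : 'I_d => 'X_j) k)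
  = gamma_times_one d ('X_[alpha] : {mpoly A[r]}) k.
Proof. by rewrite rmorph_esym; apply: eq_esym => j; apply: mmap_XU. Qed.

Lemma Gamma_lt_mmap N p : gen_alg (@esym_below d N) p ->
  Gamma_lt (fun l => N * alpha l)%N (psi p).
Proof.
apply: gen_alg_rmorph => _ [i iN ->].
have := @gamma_times_one_lt A d r alpha N i iN.
by rewrite -mmap_esym.
Qed.

End Specialisation.

Theorem proposition7p5 (A : comNzRingType) (r d : nat) (hr : (1 <= r)%N)
  (hd : (1 <= d)%N) (alpha : 'X_{1..r}) (k m : nat) (hk : (1 <= k)%N)
  (hm : (1 <= m)%N) (hkd : (k <= d)%N) :
  ((k * m <= d)%N ->
     Gamma_lt (fun i => (k * m * alpha i)%N)
       (gamma_times_one d ('X_[alpha] ^+ m : {mpoly A[r]}) k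
        - ((-1) ^+ (k * m - k) * m%:R) *:
            gamma_times_one d ('X_[alpha] : {mpoly A[r]}) (k * m)))
  /\
  ((d < k * m)%N ->
     Gamma_lt (fun i => (k * m * alpha i)%N)
       (gamma_times_one d ('X_[alpha] ^+ m : {mpoly A[r]}) k)).
Proof.
have key := Gamma_lt_mmap A alpha (esym_expr_sub_gen d hm hk).
split=> [_|ltdkm]; last first.
  by rewrite -mmap_esym_expr; move: key; rewrite (esym_eq0 _ ltdkm) mulr0 subr0.
rewrite -mmap_esym_expr -mmap_esym -mul_mpolyC.
by move: key; rewrite rmorphB !rmorphM !rmorphXn !rmorphN1 !rmorph_nat; apply.
Qed.
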